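(* Let $F$ be a Banach lattice and $\tau$ a boundedly exhaustive linear topology on $F$ weaker than the norm topology. (i) If $E\subset F$ is a closed subspace on which $\tau$ agrees with the norm topology, then $E$ is $\infty$-dispersed; if every $\tau$-null sequence in $E$ is norm-null, then $E$ is dispersed. (ii) If a bounded operator $T:F\to H$ complements $\tau$, then $T$ is $\infty$-DNS; if $T$ sequentially complements $\tau$, then $T$ is DNS.
   Context: $\tau$ is boundedly exhaustive if every norm-bounded disjoint sequence ($|f_n|\wedge|f_m|=0$, $n\neq m$) is $\tau$-null. $T$ complements (resp. sequentially complements) $\tau$ if no net (resp. sequence) $(f_p)$ in the unit sphere $\mathrm{S}_F$ is $\tau$-null with $\|Tf_p\|\to0$. $T$ is DNS if no disjoint $(f_n)\subset\mathrm{S}_F$ has $\|Tf_n\|\to0$; $\infty$-DNS if there is $r>0$ with $\liminf_n\|Tf_n\|>r$ for all disjoint $(f_n)\subset\mathrm{S}_F$. $E$ is dispersed if $\liminf_n d(f_n,E)>0$ for all disjoint $(f_n)\subset\mathrm{S}_F$ (equivalently no unit vectors $e_n\in E$ and disjoint $f_n$ with $\|e_n-f_n\|\to0$); $\infty$-dispersed if there is $r>0$ with $\liminf_n d(f_n,E)>r$ for all disjoint $(f_n)\subset\mathrm{S}_F$. *)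

From HB Require Import structures.
From mathcomp Require Import all_boot all_order all_algebra.
From mathcomp Require Import all_classical all_reals all_analysis.
Set Implicit Arguments. Unset Strict Implicit. Unset Printing Implicit Defensive.
Import Order.TTheory GRing.Theory Num.Theory.
Import numFieldNormedType.Exports.
Local Open Scope classical_set_scope.
Local Open Scope ring_scope.

Record banach_lattice (R : realType) (F : completeNormedModType R) := BanachLattice {
  bl_le : F -> F -> Prop;
  bl_sup : F -> F -> F;
  bl_refl : forall x, bl_le x x;
  bl_trans : forall x y z, bl_le x y -> bl_le y z -> bl_le x z;
  bl_antisym : forall x y, bl_le x y -> bl_le y x -> x = y;
  bl_add : forall x y z, bl_le x y -> bl_le (x + z) (y + z);
  bl_scale : forall (a : R) x y, 0 <= a -> bl_le x y -> bl_le (a *: x) (a *: y);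
  bl_sup_ubl : forall x y, bl_le x (bl_sup x y);
  bl_sup_ubr : forall x y, bl_le y (bl_sup x y);
  bl_sup_least : forall x y z, bl_le x z -> bl_le y z -> bl_le (bl_sup x y) z;
  bl_norm_mono : forall x y,
     bl_le (bl_sup x (- x)) (bl_sup y (- y)) -> `|x| <= `|y|
}.

Section BL.
Variables (R : realType) (F : completeNormedModType R) (L : banach_lattice F).

Definition bl_abs (x : F) : F := bl_sup L x (- x).
Definition bl_inf (x y : F) : F := - bl_sup L (- x) (- y).

Definition disjoint_seq (f : nat -> F) : Prop :=
  forall n m : nat, n <> m -> bl_inf (bl_abs (f n)) (bl_abs (f m)) = 0.

Definition in_sphere_seq (f : nat -> F) : Prop := forall n, `|f n| = 1.

Definition dist_set (E : set F) (x : F) : R := inf [set `|x - e| | e in E].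

Definition liminf_R (u : nat -> R) : \bar R := limn_einf (fun n => (u n)%:E).

Definition dispersed (E : set F) : Prop :=
  forall f : nat -> F, disjoint_seq f -> in_sphere_seq f ->
    (0 < liminf_R (fun n => dist_set E (f n)))%E.

Definition infty_dispersed (E : set F) : Prop :=
  exists2 r : R, 0 < r & forall f : nat -> F, disjoint_seq f -> in_sphere_seq f ->
    (r%:E < liminf_R (fun n => dist_set E (f n)))%E.

Definition DNS (H : normedModType R) (T : F -> H) : Prop :=
  ~ exists f : nat -> F, [/\ disjoint_seq f, in_sphere_seq f &
       (fun n => `|T (f n)|) @ \oo --> (0 : R)].

Definition infty_DNS (H : normedModType R) (T : F -> H) : Prop :=
  exists2 r : R, 0 < r & forall f : nat -> F, disjoint_seq f -> in_sphere_seq f ->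
    (r%:E < liminf_R (fun n => `|T (f n)|%R))%E.
End BL.

Record dirset := DirSet {
  dcar :> Type;
  dle : dcar -> dcar -> Prop;
  dle_refl : forall a, dle a a;
  dle_trans : forall a b c, dle a b -> dle b c -> dle a c;
  dle_dir : forall a b, exists c, dle a c /\ dle b c;
  d_inh : inhabited dcar
}.

Definition eventually (D : dirset) (P : D -> Prop) : Prop :=
  exists i0 : D, forall i, dle i0 i -> P i.

Section Topo.
Variables (R : realType) (F : normedModType R).

(* tau is given by its family of open sets; it is a linear (vector space)
   topology: a topology for which addition F x F -> F and scalar
   multiplication R x F -> F are (jointly) continuous. *)
Definition linear_topology (tau : set (set F)) : Prop :=
  [/\ tau setT /\ tau set0,
      (forall U V, tau U -> tau V -> tau (U `&` V)),
      (forall S : set (set F), S `<=` tau -> tau (\bigcup_(U in S) U)),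
      (forall W x y, tau W -> W (x + y) ->
         exists U V, [/\ tau U, tau V, U x, V y &
                         forall u v, U u -> V v -> W (u + v)]) &
      (forall W (a : R) x, tau W -> W (a *: x) ->
         exists2 eps : R, 0 < eps & exists U, [/\ tau U, U x &
            forall (b : R) u, `|b - a| < eps -> U u -> W (b *: u)])].

Definition weaker_than_norm (tau : set (set F)) : Prop :=
  forall U, tau U -> open U.

Definition tau_null_net (tau : set (set F)) (D : dirset) (f : D -> F) : Prop :=
  forall U, tau U -> U 0 -> eventually (fun p => U (f p)).

Definition tau_null_seq (tau : set (set F)) (f : nat -> F) : Prop :=
  forall U, tau U -> U 0 -> \forall n \near \oo, U (f n).

Definition agrees_on (tau : set (set F)) (E : set F) : Prop :=
  (forall U, tau U -> exists W, open W /\ W `&` E = U `&` E) /\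
  (forall W, open W -> exists U, tau U /\ U `&` E = W `&` E).

Definition closed_subspace (E : set F) : Prop :=
  [/\ closed E, E 0,
      (forall x y, E x -> E y -> E (x + y)) &
      (forall (a : R) x, E x -> E (a *: x))].
End Topo.

Section Ops.
Variables (R : realType) (F : completeNormedModType R) (L : banach_lattice F).

Definition boundedly_exhaustive (tau : set (set F)) : Prop :=
  forall f : nat -> F, disjoint_seq L f ->
    (exists M : R, forall n, `|f n| <= M) -> tau_null_seq tau f.

Definition bounded_op (H : normedModType R) (T : F -> H) : Prop :=
  exists C : R, forall x, `|T x| <= C * `|x|.

Definition complements (tau : set (set F)) (H : normedModType R) (T : F -> H) : Prop :=
  ~ exists (D : dirset) (f : D -> F),
      [/\ (forall p, `|f p| = 1), tau_null_net tau f &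
          forall eps : R, 0 < eps -> eventually (fun p => `|T (f p)| < eps)].

Definition seq_complements (tau : set (set F)) (H : normedModType R) (T : F -> H) : Prop :=
  ~ exists f : nat -> F,
      [/\ (forall n, `|f n| = 1), tau_null_seq tau f &
          (fun n => `|T (f n)|) @ \oo --> (0 : R)].
End Ops.

From HB Require Import structures.
From mathcomp Require Import all_boot all_order all_algebra.
From mathcomp Require Import all_classical all_reals all_analysis.
From mathcomp Require Import lra.
Import Order.TTheory GRing.Theory Num.Theory.
Import numFieldNormedType.Exports.
Local Open Scope classical_set_scope.
Local Open Scope ring_scope.

(* Since tau is boundedly exhaustive, disjoint sequences in the unit sphere are
   tau-null.
   (i) If tau agrees with the norm on E, choose a tau-neighbourhood U of 0 with
   U ∩ E = B(0, 1/2) ∩ E and a smaller one U1 with U1 + B(0, d) ⊆ U.  Once f_n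
   lies in U1, every e in E with ||f_n - e|| < d lies in B(0, 1/2), hence
   ||f_n - e|| > 1/2; so d(f_n, E) >= min(d, 1/2) eventually.  In the
   sequential case, if liminf d(f_n, E) = 0, a subsequence of (f_n) is
   approximated by vectors e_k of E with errors tending to 0; then (e_k) is
   tau-null, hence norm-null, which is absurd for unit vectors f_n.
   (ii) If T is not ∞-DNS, every tau-neighbourhood U of 0 and every r > 0 admit
   a unit vector f in U with ||T f|| < r; indexed by the pairs (U, r), these
   vectors form a tau-null net in the sphere along which ||T f|| -> 0. *)

Section LiminfR.
Context {R : realType}.
Implicit Types (u : nat -> R) (r s : R).

Lemma liminf_RE u : liminf_R u = ereal_sup (range (einfs (fun n => (u n)%:E))).
Proof.
by rewrite /liminf_R limn_einf_lim; apply/cvg_lim => //; exact: cvg_einfs_sup.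
Qed.

Lemma liminf_R_gt u r s : r < s -> (\forall n \near \oo, s <= u n) ->
  (r%:E < liminf_R u)%E.
Proof.
move=> rs [N _ uN]; rewrite liminf_RE (@lt_le_trans _ _ s%:E) ?lte_fin//.
apply: (@le_trans _ _ (einfs (fun n => (u n)%:E) N)).
  by apply: le_ereal_inf_tmp => _ [k /= Nk <-]; rewrite lee_fin; exact: uN.
by apply: ereal_sup_ubound; exists N.
Qed.

Lemma liminf_R_frequently_lt {u r} : ~ (r%:E < liminf_R u)%E ->
  forall eps, 0 < eps -> forall N, exists2 n, (N <= n)%N & u n < r + eps.
Proof.
move=> /negP; rewrite -leNgt liminf_RE => ur eps eps0 N.
have : (einfs (fun n => (u n)%:E) N < (r + eps)%:E)%E.
  rewrite (@le_lt_trans _ _ r%:E) ?lte_fin ?ltrDl// (le_trans _ ur)//.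
  by apply: ereal_sup_ubound; exists N.
by case/ereal_inf_lt => _ [n /= Nn <-]; rewrite lte_fin; exists n.
Qed.

End LiminfR.

Lemma frequently_increasing_seq {P : nat -> nat -> Prop} :
  (forall k N, exists2 n, (N <= n)%N & P k n) ->
  exists2 phi : nat -> nat, increasing_seq phi & forall k, P k (phi k).
Proof.
move=> hP; have /choice [g gP] : forall kN : nat * nat,
    exists n, (kN.2 <= n)%N /\ P kN.1 n.
  by move=> [k N]; have [n] := hP k N; exists n.
pose fix phi k := g (k, if k is k'.+1 then (phi k').+1 else 0%N).
exists phi; last by case=> [|k] /=; exact: (proj2 (gP (_, _))).
by apply/increasing_seqP => k; have [] := gP (k.+1, (phi k).+1).
Qed.

Lemma norm1_half_far {R : realType} {V : normedModType R} {x e : V} :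
  `|x| = 1 -> `|e| < 2^-1 -> 2^-1 < `|x - e|.
Proof.
move=> x1 e2; have := ler_normD (x - e) e; rewrite subrK x1 => h; lra.
Qed.

Section WeakLinearTopology.
Context {R : realType} {F : normedModType R} {tau : set (set F)}.
Hypotheses (htau : linear_topology tau) (hweak : weaker_than_norm tau).

Lemma tau_nbhs0_split {U} : tau U -> U 0 ->
  exists U1 d, [/\ tau U1, U1 0, 0 < d &
    forall u v, U1 u -> `|v| < d -> U (u + v)].
Proof.
move=> tU U0; case: htau => _ _ _ hadd _.
have U00 : U (0 + 0) by rewrite addr0.
have [U1 [V1 [tU1 tV1 U10 V10 UV]]] := hadd U 0 0 tU U00.
have : nbhs (0 : F) V1 by apply: open_nbhs_nbhs; split => //; exact: hweak.
move=> /nbhs_norm0P [d /= d0 V1d]; exists U1, d; split => // u v U1u vd.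
by apply: UV U1u _; exact: V1d.
Qed.

Lemma tau_null_seq_perturb {f g : nat -> F} : tau_null_seq tau f ->
  (forall d, 0 < d -> \forall n \near \oo, `|g n - f n| < d) ->
  tau_null_seq tau g.
Proof.
move=> f0 gf U tU U0; have [U1 [d [tU1 U10 d0 hU]]] := tau_nbhs0_split tU U0.
near=> n; rewrite -[g n](addrNK (f n)) addrC; apply: hU.
- by near: n; exact: f0.
- by near: n; exact: gf.
Unshelve. all: end_near. Qed.

End WeakLinearTopology.

Section TauNbhs0Radius.
Context {R : realType} {F : normedModType R} (tau : set (set F)).
Hypotheses (tauT : tau setT) (tauI : forall U V, tau U -> tau V -> tau (U `&` V)).

Definition tau_nbhs0_radius := {p : set F * R | [/\ tau p.1, p.1 0 & 0 < p.2]}.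

Definition refines (p q : tau_nbhs0_radius) :=
  (sval q).1 `<=` (sval p).1 /\ (sval q).2 <= (sval p).2.

Lemma refines_refl p : refines p p. Proof. by split. Qed.

Lemma refines_trans p q s : refines p q -> refines q s -> refines p s.
Proof.
move=> [pq1 pq2] [qs1 qs2].
by split; [exact: subset_trans pq1|exact: le_trans pq2].
Qed.

Lemma refines_directed p q : exists s, refines p s /\ refines q s.
Proof.
case: p q => [[U r] [tU U0 r0]] [[V s] [tV V0 s0]].
have UVrs : [/\ tau (U `&` V), (U `&` V) 0 & 0 < Num.min r s].
  by split; [exact: tauI|by []|rewrite lt_min r0 s0].
exists (exist _ (U `&` V, Num.min r s) UVrs).
by rewrite /refines /= !ge_min !lexx ?orbT.
Qed.

Lemma tau_nbhs0_radius_inhabited : inhabited tau_nbhs0_radius.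
Proof.
have T1 : [/\ tau [set: F], [set: F] 0 & (0 : R) < 1] by [].
exact: inhabits (exist _ (setT, 1) T1).
Qed.

Definition tau_nbhs0_radius_dirset : dirset :=
  DirSet refines_refl refines_trans refines_directed tau_nbhs0_radius_inhabited.

End TauNbhs0Radius.

Lemma disjoint_seq_comp {R : realType} {F : completeNormedModType R}
    (L : banach_lattice F) {f : nat -> F} {phi : nat -> nat} :
  injective phi -> disjoint_seq L f -> disjoint_seq L (f \o phi).
Proof. by move=> phi_inj fd n m nm; apply: fd => /phi_inj. Qed.

Section BoundedlyExhaustive.
Context {R : realType} {F : completeNormedModType R} {L : banach_lattice F}.
Context {tau : set (set F)}.
Hypothesis hbe : boundedly_exhaustive L tau.

Lemma disjoint_sphere_tau_null {f : nat -> F} :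
  disjoint_seq L f -> in_sphere_seq f -> tau_null_seq tau f.
Proof. by move=> fd fs; apply: hbe => //; exists 1 => n; rewrite fs. Qed.

Lemma seq_complements_DNS (H : normedModType R) (T : F -> H) :
  seq_complements tau T -> DNS L T.
Proof.
move=> hc [f [fd fs Tf0]]; apply: hc; exists f; split => //.
exact: disjoint_sphere_tau_null.
Qed.

Lemma not_infty_DNS_small (H : normedModType R) (T : F -> H) :
  ~ infty_DNS L T -> forall U r, tau U -> U 0 -> 0 < r ->
  exists x, [/\ `|x| = 1, U x & `|T x| < r].
Proof.
move=> nT U r tU U0 r0.
have : ~ (forall f, disjoint_seq L f -> in_sphere_seq f ->
            ((r / 2)%:E < liminf_R (fun n => `|T (f n)|%R))%E).
  by move=> h; apply: nT; exists (r / 2) => //; rewrite divr_gt0.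
move=> /existsNP [f /not_implyP [fd /not_implyP [fs Tf]]].
have [N _ UfN] := disjoint_sphere_tau_null fd fs U tU U0.
have [n Nn Tfn] := liminf_R_frequently_lt Tf _ (divr_gt0 r0 (ltr0n _ 2)) N.
by exists (f n); split; [exact: fs|exact: UfN|rewrite -splitr in Tfn].
Qed.

Lemma complements_infty_DNS (H : normedModType R) (T : F -> H) :
  linear_topology tau -> complements tau T -> infty_DNS L T.
Proof.
move=> [[tauT _] tauI _ _ _] hc; apply: contrapT => /not_infty_DNS_small small.
apply: hc; have /choice [x xP] : forall p : tau_nbhs0_radius tau,
    exists x, [/\ `|x| = 1, (sval p).1 x & `|T x| < (sval p).2].
  by case=> [[U r] [tU U0 r0]]; exact: small.
exists (tau_nbhs0_radius_dirset tau tauT tauI), x; split.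
- by move=> p; have [] := xP p.
- move=> U tU U0; have U1 : [/\ tau U, U 0 & (0 : R) < 1] by [].
  by exists (exist _ (U, 1) U1) => p [pU _]; have [_ /pU] := xP p.
- move=> eps eps0; have Teps : [/\ tau [set: F], [set: F] 0 & 0 < eps] by [].
  exists (exist _ (setT, eps) Teps) => p [_ peps].
  by have [_ _ /lt_le_trans] := xP p; exact.
Qed.

Hypotheses (htau : linear_topology tau) (hweak : weaker_than_norm tau).

Lemma agrees_on_infty_dispersed (E : set F) :
  E 0 -> agrees_on tau E -> infty_dispersed L E.
Proof.
move=> E0 [_ normU].
have [U [tU UE]] := normU (ball (0 : F) 2^-1) (ball_open _ _).
have U0 : U 0.
  have : (ball (0 : F) 2^-1 `&` E) 0 by split=> //; apply: ballxx.
  by rewrite -UE => -[].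
have [U1 [d [tU1 U10 d0 hU]]] := tau_nbhs0_split htau hweak tU U0.
pose r := Num.min d 2^-1; have r0 : 0 < r by rewrite lt_min d0 invr_gt0 ltr0n.
exists (r / 2) => [|f fd fs]; first by rewrite divr_gt0.
apply: (@liminf_R_gt _ _ _ r); first lra.
have [N _ U1f] := disjoint_sphere_tau_null fd fs U1 tU1 U10.
exists N => // n /U1f U1fn; apply: lb_le_inf; first by exists `|f n - 0|, 0.
move=> _ [e Ee <-]; rewrite leNgt; apply/negP => fer.
have : (U `&` E) e.
  split => //; rewrite -[e](addrNK (f n)) addrC; apply: hU U1fn _.
  by rewrite distrC (lt_le_trans fer) // ge_min lexx.
rewrite UE => -[/=]; rewrite -ball_normE /ball_ /= sub0r normrN => e2 _.
have := norm1_half_far (fs n) e2; have : r <= 2^-1 by rewrite ge_min lexx orbT.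
lra.
Qed.

Lemma tau_null_norm_null_dispersed (E : set F) : E !=set0 ->
  (forall f : nat -> F, (forall n, E (f n)) -> tau_null_seq tau f ->
     f @ \oo --> (0 : F)) ->
  dispersed L E.
Proof.
move=> [e0 Ee0] hE f fd fs; apply: contrapT => fE.
have fE_close k N : exists2 n, (N <= n)%N &
    exists e, E e /\ `|f n - e| < k.+1%:R^-1.
  have k0 : 0 < k.+1%:R^-1 :> R by rewrite invr_gt0.
  have [n Nn] := liminf_R_frequently_lt fE _ k0 N.
  rewrite add0r => /inf_lt [|_ [e Ee <-] fe]; first by exists `|f n - e0|, e0.
  by exists n => //; exists e.
have [phi phi_incr /choice [e /all_and2 [Ee fe]]] :=
  frequently_increasing_seq fE_close.
have fphi0 : tau_null_seq tau (f \o phi).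
  apply: disjoint_sphere_tau_null => [|k]; last exact: fs.
  exact: disjoint_seq_comp (increasing_seq_injective phi_incr) fd.
have e_null : e @ \oo --> (0 : F).
  apply: hE => //; apply: (tau_null_seq_perturb htau hweak fphi0) => d d0.
  near=> k; rewrite distrC (lt_trans (fe k)) //.
  by near: k; exact: (near_infty_natSinv_lt (PosNum d0)).
have half0 : 0 < 2^-1 :> R by rewrite invr_gt0.
near \oo => k.
have ek : `|e k| < 2^-1.
  by near: k; exact: (proj1 (cvgr0Pnorm_lt _) e_null _ half0).
have k2 : k.+1%:R^-1 < 2^-1 :> R.
  by near: k; exact: (near_infty_natSinv_lt (PosNum half0)).
have := norm1_half_far (fs (phi k)) ek.
by rewrite ltNge (ltW (lt_trans (fe k) k2)).
Unshelve. all: end_near. Qed.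

End BoundedlyExhaustive.

Theorem mainTheorem14 (R : realType) (F : completeNormedModType R)
  (L : banach_lattice F) (tau : set (set F))
  (htau : linear_topology tau) (hweak : weaker_than_norm tau)
  (hbe : boundedly_exhaustive L tau) :
  (* (i) *)
  (forall E : set F, closed_subspace E -> agrees_on tau E ->
     infty_dispersed L E) /\
  (forall E : set F, closed_subspace E ->
     (forall f : nat -> F, (forall n, E (f n)) -> tau_null_seq tau f ->
        f @ \oo --> (0 : F)) ->
     dispersed L E) /\
  (* (ii) *)
  (forall (H : completeNormedModType R) (T : {linear F -> H}),
     bounded_op T -> complements tau T -> infty_DNS L T) /\
  (forall (H : completeNormedModType R) (T : {linear F -> H}),
     bounded_op T -> seq_complements tau T -> DNS L T).
Proof.
split=> [E [_ E0 _ _]|].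
  exact: agrees_on_infty_dispersed hbe htau hweak E E0.
split=> [E [_ E0 _ _]|].
  by apply: (tau_null_norm_null_dispersed hbe htau hweak); exists 0.
split=> H T _; first exact: complements_infty_DNS hbe H T htau.
exact: seq_complements_DNS hbe H T.
Qed.
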